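(* There exists a task in the two-party one-way communication (Holevo–Frenkel–Weiner) scenario for which the utility of one qubit of communication (with no pre-shared correlation) is higher than the utility of one classical bit of communication assisted by $1$ bit of shared randomness: there exist finite sets $\mathcal{X},\mathcal{B}$ and a payoff function $\beta$ such that $\sup_{P\in\mathcal{Q}}\beta(P)>\sup_{P\in\mathcal{C}_2}\beta(P)$.
   Context: Scenario: Alice receives an input $x$ from a finite set $\mathcal{X}$, Bob must output $b$ from a finite set $\mathcal{B}$; a correlation is $P=(P(b|x))$, a task is a real payoff function $\beta$ on correlations, and the utility of a resource is $\sup\beta(P)$ over correlations achievable with it. $\mathcal{C}$: correlations $P(b|x)=\sum_{m\in\{0,1\}}E(m|x)D(b|m)$ with $E(\cdot|x)$ a probability distribution on $\{0,1\}$ for each $x$ and $D(\cdot|m)$ a probability distribution on $\mathcal{B}$ for each $m$. $\mathcal{C}_2$ (one classical bit plus $1$ bit of shared randomness): correlations $qP_0+(1-q)P_1$ with $q\in[0,1]$ and $P_0,P_1\in\mathcal{C}$. $\mathcal{Q}$ (one qubit, no shared correlation): correlations $P(b|x)=\operatorname{Tr}(\rho_x\pi_b)$ with each $\rho_x$ a density operator on $\mathbb{C}^2$ and $\{\pi_b\}_{b\in\mathcal{B}}$ a POVM on $\mathbb{C}^2$. *)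

From HB Require Import structures.
From mathcomp Require Import all_boot all_order all_algebra.
From mathcomp Require Import all_classical all_reals.
From mathcomp Require Import ereal.
From mathcomp Require Import Rstruct.
From mathcomp.real_closed Require Import complex.

Set Implicit Arguments. Unset Strict Implicit. Unset Printing Implicit Defensive.
Import Order.TTheory GRing.Theory Num.Theory.
Local Open Scope ring_scope.

Notation RR := Rdefinitions.R.
Notation CC := (complex RR).

(* A correlation P(b|x) is represented as P x b. *)
Definition corr (X B : finType) := X -> B -> RR.

Definition classical_bit (X B : finType) (P : corr X B) : Prop :=
  exists (E : X -> bool -> RR) (D : bool -> B -> RR),
    (forall x m, 0 <= E x m) /\ (forall x, \sum_(m : bool) E x m = 1) /\
    (forall m b, 0 <= D m b) /\ (forall m, \sum_(b : B) D m b = 1) /\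
    (forall x b, P x b = \sum_(m : bool) E x m * D m b).

Definition classical_bit_sr (X B : finType) (P : corr X B) : Prop :=
  exists (q : RR) (P0 P1 : corr X B),
    0 <= q /\ q <= 1 /\ classical_bit P0 /\ classical_bit P1 /\
    (forall x b, P x b = q * P0 x b + (1 - q) * P1 x b).

Definition adj (m n : nat) (A : 'M[CC]_(m, n)) : 'M[CC]_(n, m) :=
  (map_mx Num.conj A)^T.

Definition psd (A : 'M[CC]_2) : Prop :=
  adj A = A /\ forall v : 'cV[CC]_2, 0 <= (adj v *m A *m v) 0 0.

Definition density (rho : 'M[CC]_2) : Prop := psd rho /\ \tr rho = 1.

Definition povm (B : finType) (pi : B -> 'M[CC]_2) : Prop :=
  (forall b, psd (pi b)) /\ \sum_(b : B) pi b = 1%:M.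

Definition qubit (X B : finType) (P : corr X B) : Prop :=
  exists (rho : X -> 'M[CC]_2) (pi : B -> 'M[CC]_2),
    (forall x, density (rho x)) /\ povm pi /\
    (forall x b, real_complex _ (P x b) = \tr (rho x *m pi b)).

Definition utility (X B : finType) (S : corr X B -> Prop)
  (beta : corr X B -> RR) : \bar RR :=
  ereal_sup [set (beta P)%:E | P in S].

(* A classical bit plus shared randomness produces correlations P(b|x) that,
   up to an x-independent offset, are the sum of two rank-one terms
   e_1(x) w_1(b) + e_2(x) w_2(b).  Second differences
   P(x,b) - P(x,b') - P(x0,b) + P(x0,b') kill the offset, so every matrix of
   them has rank at most 2.  A qubit prepared in the eigenstates of
   sigma_x, sigma_y, sigma_z (or the maximally mixed state x0) and measured
   in a uniformly random Pauli basis gives such a 3 x 3 matrix equal to 1/3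
   times the identity, of rank 3.  Payoff 1 outside C_2 and 0 inside
   separates the two utilities. *)

From mathcomp Require Import all_boot all_order all_algebra.
From mathcomp Require Import all_classical all_reals ereal Rstruct.
From mathcomp.real_closed Require Import complex.
From mathcomp Require Import ring lra.
Import Order.TTheory GRing.Theory Num.Theory.
Local Open Scope ring_scope.

Section AffineRank.
Context {X B : finType}.

Definition affine_rank_le (k : nat) (P : corr X B) : Prop :=
  exists (c : B -> RR) (e : X -> 'rV[RR]_k) (w : B -> 'cV[RR]_k),
    forall x b, P x b = c b + (e x *m w b) 0 0.

Lemma classical_bit_affine_rank1 (P : corr X B) :
  classical_bit P -> affine_rank_le 1 P.
Proof.
move=> [E [D [_ [sumE [_ [_ defP]]]]]].
exists (D true), (fun x => (E x false)%:M), (fun b => (D false b - D true b)%:M).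
move=> x b; rewrite defP -scalar_mxM mxE big_bool /= mulr1n.
have -> : E x true = 1 - E x false by move: (sumE x); rewrite big_bool /=; lra.
ring.
Qed.

Lemma affine_rank_le_mix {k l : nat} {q : RR} {P0 P1 P : corr X B} :
  affine_rank_le k P0 -> affine_rank_le l P1 ->
  (forall x b, P x b = q * P0 x b + (1 - q) * P1 x b) ->
  affine_rank_le (k + l) P.
Proof.
move=> [c0 [e0 [w0 def0]]] [c1 [e1 [w1 def1]]] defP.
exists (fun b => q * c0 b + (1 - q) * c1 b), (fun x => row_mx (e0 x) (e1 x)),
  (fun b => col_mx (q *: w0 b) ((1 - q) *: w1 b)).
move=> x b; rewrite defP def0 def1 mul_row_col -!scalemxAr !mxE; ring.
Qed.

Lemma classical_bit_sr_affine_rank2 (P : corr X B) :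
  classical_bit_sr P -> affine_rank_le 2 P.
Proof.
move=> [q [P0 [P1 [_ [_ [C0 [C1 defP]]]]]]].
exact (affine_rank_le_mix (classical_bit_affine_rank1 _ C0)
  (classical_bit_affine_rank1 _ C1) defP).
Qed.

Definition contrast_mx {n : nat} (P : corr X B) (x0 : X) (xs : 'I_n -> X)
    (bs : 'I_n -> B * B) : 'M[RR]_n :=
  \matrix_(i, j) (P (xs i) (bs j).1 - P (xs i) (bs j).2
                  - (P x0 (bs j).1 - P x0 (bs j).2)).

Lemma rank_contrast_mx {n k : nat} {P : corr X B} (x0 : X) (xs : 'I_n -> X)
    (bs : 'I_n -> B * B) :
  affine_rank_le k P -> (\rank (contrast_mx P x0 xs bs) <= k)%N.
Proof.
move=> [c [e [w defP]]].
have -> : contrast_mx P x0 xs bs =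
    (\matrix_(i, l) (e (xs i) 0 l - e x0 0 l)) *m
    (\matrix_(l, j) (w (bs j).1 l 0 - w (bs j).2 l 0)).
  apply/matrixP => i j; rewrite !mxE !defP !mxE.
  under [RHS]eq_bigr do rewrite !mxE mulrBl !mulrBr.
  rewrite !sumrB; ring.
exact: mulmx_max_rank.
Qed.

End AffineRank.

Local Open Scope complex_scope.

Lemma sum_ord2 (V : nmodType) (F : 'I_2 -> V) : \sum_(i < 2) F i = F 0 + F 1.
Proof.
by rewrite !big_ord_recr big_ord0 /= add0r; congr (F _ + F _); apply: val_inj.
Qed.

Lemma sum_ord3 (V : nmodType) (F : 'I_3 -> V) :
  \sum_(i < 3) F i = F 0 + F 1 + F 2.
Proof.
rewrite !big_ord_recr big_ord0 /= add0r.
by congr (F _ + F _ + F _); apply: val_inj.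
Qed.

Lemma sum_complex (I : Type) (r : seq I) (F G : I -> RR) :
  \sum_(i <- r) (F i +i* G i) = (\sum_(i <- r) F i) +i* (\sum_(i <- r) G i).
Proof. by elim: r => [|i r IHr]; rewrite ?big_nil // !big_cons IHr. Qed.

Definition mx2 (a b c d : CC) : 'M[CC]_2 :=
  \matrix_(i, j) if i == 0 then (if j == 0 then a else b)
                 else (if j == 0 then c else d).

Lemma sum_mx2 (I : Type) (r : seq I) (a b c d : I -> CC) :
  \sum_(i <- r) mx2 (a i) (b i) (c i) (d i) =
  mx2 (\sum_(i <- r) a i) (\sum_(i <- r) b i)
      (\sum_(i <- r) c i) (\sum_(i <- r) d i).
Proof.
apply/matrixP => i j; rewrite summxE !mxE.
by under eq_bigr do rewrite mxE; case: (i == 0); case: (j == 0).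
Qed.

Lemma mx2_form (a b c d : CC) (v : 'cV[CC]_2) :
  (adj v *m mx2 a b c d *m v) 0 0 =
  (v 0 0)^* * (a * v 0 0 + b * v 1 0) + (v 1 0)^* * (c * v 0 0 + d * v 1 0).
Proof. by rewrite mxE sum_ord2 !mxE !sum_ord2 !mxE /=; ring. Qed.

Lemma psd_mx2 (a d u w : RR) :
  0 <= a -> 0 <= d -> u ^+ 2 + w ^+ 2 <= a * d ->
  psd (mx2 a%:C (u -i* w) (u +i* w) d%:C).
Proof.
move=> a_ge0 d_ge0 uw_le; split.
  apply/matrixP => i j; rewrite !mxE; case: (i == 0); case: (j == 0);
    by rewrite -[Num.conj _]/(conjc _) /= ?oppr0 ?opprK.
move=> v; rewrite mx2_form.
case: (v 0 0) => p1 p2; case: (v 1 0) => q1 q2; simpc.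
apply/andP; split; first by apply/eqP; ring.
have [a0|a_neq0] := eqVneq a 0.
  rewrite a0 mul0r in uw_le *.
  have /andP[/eqP-> /eqP->] : (u == 0) && (w == 0).
    rewrite -[u == 0]sqrf_eq0 -[w == 0]sqrf_eq0 -paddr_eq0 ?sqr_ge0 //.
    by rewrite eq_le uw_le addr_ge0 ?sqr_ge0.
  nra.
have a_gt0 : 0 < a by rewrite lt_neqAle eq_sym a_neq0.
(* Completing the square: a * form = |a p + (u - i w) q|^2 + (a d - u^2 - w^2) |q|^2. *)
rewrite -(pmulr_rge0 _ a_gt0).
have -> : a * (p1 * (a * p1 + (u * q1 + w * q2)) + p2 * (a * p2 + (u * q2 - w * q1))
    + (q1 * (u * p1 - w * p2 + d * q1) + q2 * (u * p2 + w * p1 + d * q2))) =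
  (a * p1 + u * q1 + w * q2) ^+ 2 + (a * p2 + u * q2 - w * q1) ^+ 2 +
  (a * d - (u ^+ 2 + w ^+ 2)) * (q1 ^+ 2 + q2 ^+ 2) by ring.
by rewrite !addr_ge0 ?sqr_ge0 // mulr_ge0 ?subr_ge0 // addr_ge0 ?sqr_ge0.
Qed.

(* [bloch t r] is t I + r_0 sigma_x + r_1 sigma_y + r_2 sigma_z. *)
Definition bloch (t : RR) (r : 'I_3 -> RR) : 'M[CC]_2 :=
  mx2 (t + r 2)%:C (r 0 -i* r 1) (r 0 +i* r 1) (t - r 2)%:C.

Lemma psd_bloch (t : RR) (r : 'I_3 -> RR) :
  0 <= t -> \sum_k r k ^+ 2 <= t ^+ 2 -> psd (bloch t r).
Proof. by rewrite sum_ord3 => t_ge0 r_le; apply: psd_mx2; nra. Qed.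

Lemma tr_bloch (t : RR) (r : 'I_3 -> RR) : \tr (bloch t r) = (2 * t)%:C.
Proof.
by rewrite /mxtrace sum_ord2 !mxE /= -!complexr0; simpc; congr (_ +i* _); ring.
Qed.

Lemma tr_bloch_mul (t t' : RR) (r r' : 'I_3 -> RR) :
  \tr (bloch t r *m bloch t' r') = (2 * (t * t' + \sum_k r k * r' k))%:C.
Proof.
rewrite /mxtrace sum_ord2 !mxE !sum_ord2 !mxE sum_ord3 /= -!complexr0; simpc.
congr (_ +i* _); ring.
Qed.

Lemma sum_bloch (I : Type) (s : seq I) (t : I -> RR) (r : I -> 'I_3 -> RR) :
  \sum_(i <- s) bloch (t i) (r i) =
  bloch (\sum_(i <- s) t i) (fun k => \sum_(i <- s) r i k).
Proof.
by rewrite /bloch sum_mx2 -!complexr0 !sum_complex big1_eq sumrN big_split sumrB.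
Qed.

Lemma bloch1 : bloch 1 (fun=> 0) = 1%:M.
Proof.
apply/matrixP => i j; rewrite !mxE.
by case: i j => [[|[|//]] ?] [[|[|//]] ?]; rewrite /= ?(oppr0, addr0, subr0).
Qed.

(* Input [None] is the maximally mixed state and [Some i] the +1 eigenstate of
   the i-th Pauli matrix; output [(i, s)] means that sigma_i was measured
   (probability 1/3) with outcome (-1)^s. *)
Definition pauli_state (x : option 'I_3) (k : 'I_3) : RR :=
  if x is Some i then (i == k)%:R else 0.

Definition pauli_effect (b : 'I_3 * bool) (k : 'I_3) : RR :=
  (b.1 == k)%:R * (-1) ^+ b.2.

Definition pauli_rho (x : option 'I_3) : 'M[CC]_2 :=
  bloch (1/2) (fun k => pauli_state x k / 2).

Definition pauli_pi (b : 'I_3 * bool) : 'M[CC]_2 :=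
  bloch (1/6) (fun k => pauli_effect b k / 6).

Definition pauli_corr : corr (option 'I_3) ('I_3 * bool)%type :=
  fun x b => (1 + (x == Some b.1)%:R * (-1) ^+ b.2) / 6.

Lemma density_pauli_rho (x : option 'I_3) : density (pauli_rho x).
Proof.
split; last by rewrite tr_bloch; congr _%:C; field.
apply: psd_bloch; first lra.
by rewrite sum_ord3; case: x => [[[|[|[|//]]] ?]|] /=; lra.
Qed.

Lemma povm_pauli_pi : povm pauli_pi.
Proof.
split=> [b|].
  apply: psd_bloch; first lra.
  by rewrite sum_ord3 /pauli_effect; case: b => [[[|[|[|//]]] ?] []] /=; lra.
rewrite sum_bloch -bloch1; congr bloch.
  by rewrite sumr_const card_prod !card_ord card_bool; field.
apply/funext => k; rewrite /pauli_effect.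
rewrite -(pair_bigA _ (fun i (s : bool) => (i == k)%:R * (-1) ^+ s / 6)).
by rewrite big1 // => i _; rewrite big_bool /=; lra.
Qed.

Lemma pauli_dot (x : option 'I_3) (b : 'I_3 * bool) :
  \sum_k pauli_state x k * pauli_effect b k = (x == Some b.1)%:R * (-1) ^+ b.2.
Proof.
case: x => [i|]; last by rewrite big1 /= ?mul0r // => k _; rewrite mul0r.
rewrite (bigD1 i) //= big1 => [|k /negbTE ik]; last by rewrite eq_sym ik mul0r.
by rewrite eqxx mul1r addr0 /pauli_effect eq_sym.
Qed.

Lemma tr_pauli (x : option 'I_3) (b : 'I_3 * bool) :
  \tr (pauli_rho x *m pauli_pi b) = (pauli_corr x b)%:C.
Proof.
rewrite tr_bloch_mul /pauli_corr -pauli_dot; congr _%:C.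
rewrite (_ : \sum_k _ = (\sum_k pauli_state x k * pauli_effect b k) / 12).
  by field.
by rewrite mulr_suml; apply: eq_bigr => k _; field.
Qed.

Lemma qubit_pauli_corr : qubit pauli_corr.
Proof.
exists pauli_rho, pauli_pi; split; first exact: density_pauli_rho.
by split=> [|x b]; [exact: povm_pauli_pi | rewrite tr_pauli].
Qed.

Lemma contrast_mx_pauli :
  contrast_mx pauli_corr None Some (fun i => ((i, false), (i, true))) = 3^-1%:M.
Proof.
apply/matrixP => i j; rewrite !mxE /pauli_corr /=.
have -> : (Some i == Some j) = (i == j) by [].
by case: (i == j); rewrite ?mulr1n ?mulr0n; field.
Qed.

Lemma pauli_corr_not_sr : ~ classical_bit_sr pauli_corr.
Proof.
move/classical_bit_sr_affine_rank2.
move/(rank_contrast_mx None Some (fun i => ((i, false), (i, true)))).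
by rewrite contrast_mx_pauli -scalemx1 (eqmx_scale _ (_ : 3^-1 != 0)) ?mxrank1.
Qed.

Close Scope complex_scope.
Local Open Scope ereal_scope.

Definition payoff_outside {X B : finType} (S : corr X B -> Prop) (P : corr X B) : RR :=
  if pselect (S P) then 0%R else 1%R.

Lemma utility_payoff_outside {X B : finType} (S T : corr X B -> Prop) (P : corr X B) :
  T P -> ~ S P -> utility S (payoff_outside S) < utility T (payoff_outside S).
Proof.
move=> TP nSP; apply: (@le_lt_trans _ _ 0%E).
  by apply: ge_ereal_sup => _ [Q SQ <-]; rewrite /payoff_outside; case: pselect.
apply: (@lt_le_trans _ _ 1%E); first by rewrite lte_fin ltr01.
apply: ereal_sup_ubound; exists P => //.
by rewrite /payoff_outside; case: pselect.
Qed.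

Theorem theorem4 :
  exists (X B : finType) (beta : corr X B -> RR),
    utility (@classical_bit_sr X B) beta < utility (@qubit X B) beta.
Proof.
exists (option 'I_3), ('I_3 * bool)%type, (payoff_outside (@classical_bit_sr _ _)).
exact: utility_payoff_outside qubit_pauli_corr pauli_corr_not_sr.
Qed.
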